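(* Let $\lambda>0$ be the wavelength, let $N\ge 1$ be an integer, let $\delta=\lambda/2$, let $\Delta\ge 0$, and set $\overline{\Delta}=\frac{\Delta+(N-1)\delta}{2}$. Let $z>0$ and $F>0$ with $z\neq F$, and define $$\hat{G}_2=\frac{1}{(2N\delta^2)^2}\Bigg|\int_{-\frac{N\delta}{2}}^{\frac{N\delta}{2}}\int_{-\frac{\delta}{2}}^{\frac{\delta}{2}} e^{\mathrm{i}\frac{2\pi}{\lambda}\left(\frac{(x-\overline{\Delta})^2}{2F}+\frac{y^2}{2F}\right)}e^{-\mathrm{i}\frac{2\pi}{\lambda}\left(\frac{(x-\overline{\Delta})^2}{2z}+\frac{y^2}{2z}\right)}dy\,dx$$ $$\qquad\qquad+\int_{-\frac{N\delta}{2}}^{\frac{N\delta}{2}}\int_{-\frac{\delta}{2}}^{\frac{\delta}{2}} e^{\mathrm{i}\frac{2\pi}{\lambda}\left(\frac{(x+\overline{\Delta})^2}{2F}+\frac{y^2}{2F}\right)}e^{-\mathrm{i}\frac{2\pi}{\lambda}\left(\frac{(x+\overline{\Delta})^2}{2z}+\frac{y^2}{2z}\right)}dy\,dx\Bigg|^2 .$$ Let $z_{\rm eff}=\frac{Fz}{|F-z|}$, $a=\frac{\lambda}{8z_{\rm eff}}$, $\beta_1=\sqrt{a}\,N+\sqrt{\frac{2}{\lambda z_{\rm eff}}}\,\overline{\Delta}$ and $\beta_2=\sqrt{a}\,N-\sqrt{\frac{2}{\lambda z_{\rm eff}}}\,\overline{\Delta}$. Then $$\hat{G}_2=\frac{1}{(2Na)^2}\left(C^2(\sqrt{a})+S^2(\sqrt{a})\right)\left(\left(C(\beta_1)+C(\beta_2)\right)^2+\left(S(\beta_1)+S(\beta_2)\right)^2\right),$$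 where $C$ and $S$ are the Fresnel integrals.
   Context: The Fresnel integrals are $C(u)=\int_0^u\cos\left(\frac{\pi t^2}{2}\right)dt$ and $S(u)=\int_0^u\sin\left(\frac{\pi t^2}{2}\right)dt$; $\mathrm{i}$ is the imaginary unit. Physically, $\hat{G}_2$ is the (Fresnel-approximated) normalized array gain of a modular linear array consisting of two collinear uniform linear arrays of $N$ antennas each (antenna side $\delta$) along the $x$-axis separated by $\Delta$, receiving from a transmitter at $(0,0,z)$ with matched filtering focused at $(0,0,F)$. *)

From Stdlib Require Import Reals.
From Coquelicot Require Import Coquelicot.
Open Scope R_scope.

Definition expi (t : R) : C := (cos t, sin t).

Definition FresnelC (u : R) : R := RInt (fun t => cos (PI * t ^ 2 / 2)) 0 u.
Definition FresnelS (u : R) : R := RInt (fun t => sin (PI * t ^ 2 / 2)) 0 u.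

(* integrand of one sub-array, shifted by s (s = -Delta_bar or +Delta_bar) *)
Definition integrand (lambda z F s x y : R) : C :=
  Cmult (expi ((2 * PI / lambda) * ((x + s) ^ 2 / (2 * F) + y ^ 2 / (2 * F))))
        (expi (- ((2 * PI / lambda) * ((x + s) ^ 2 / (2 * z) + y ^ 2 / (2 * z))))).

Definition ula_integral (lambda : R) (N : nat) (z F s : R) : C :=
  let delta := lambda / 2 in
  @RInt C_R_CompleteNormedModule (fun x => @RInt C_R_CompleteNormedModule (fun y => integrand lambda z F s x y)
                      (- delta / 2) (delta / 2))
       (- (INR N * delta) / 2) (INR N * delta / 2).

Definition Delta_bar (lambda : R) (N : nat) (Delta : R) : R :=
  (Delta + (INR N - 1) * (lambda / 2)) / 2.

Definition G2hat (lambda : R) (N : nat) (Delta z F : R) : R :=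
  let delta := lambda / 2 in
  let Db := Delta_bar lambda N Delta in
  / (2 * INR N * delta ^ 2) ^ 2 *
  (Cmod (Cplus (ula_integral lambda N z F (- Db))
               (ula_integral lambda N z F Db))) ^ 2.

From Stdlib Require Import Reals Lra Lia.
From Coquelicot Require Import Coquelicot.
Open Scope R_scope.

(* Both phases of the integrand are quadratic in the aperture coordinates, so the
   integrand of a sub-array shifted by s is expi (c ((x + s)^2 + y^2)) with
   c = PI (z - F) / (lambda F z) = sg PI / (2 L^2), where L^2 = lambda z_eff / 2 and
   sg = 1 or -1 is the sign of z - F.  The double integral thus factors into two
   one-dimensional chirp integrals, and the substitution t = w / L turns each of them
   into a difference of Fresnel integrals.  As C and S are odd, the common y-factor is
   2 L (C (sqrt a), sg S (sqrt a)), and the x-factors of the two sub-arrays add up to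
   2 L (C beta1 + C beta2, sg (S beta1 + S beta2)); taking squared moduli gives the
   formula, the factor L^4 cancelling against the normalisation. *)

Lemma expi_add x y : expi (x + y) = Cmult (expi x) (expi y).
Proof. unfold expi, Cmult; simpl. rewrite cos_plus, sin_plus. f_equal; ring. Qed.

Lemma expi_sign sg t : sg = 1 \/ sg = -1 -> expi (sg * t) = (cos t, sg * sin t).
Proof.
  unfold expi; intros [-> | ->]; f_equal.
  - now rewrite Rmult_1_l.
  - now rewrite !Rmult_1_l.
  - now replace (-1 * t) with (- t) by ring; rewrite cos_neg.
  - now replace (-1 * t) with (- t) by ring; rewrite sin_neg; ring.
Qed.

Lemma is_RInt_C_pair (f : R -> C) a b (l : C) :
  is_RInt (fun t => fst (f t)) a b (fst l) -> is_RInt (fun t => snd (f t)) a b (snd l) ->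
  @is_RInt C_R_CompleteNormedModule f a b l.
Proof.
  destruct l as [l1 l2].
  exact (is_RInt_fct_extend_pair (U:=R_NormedModule) (V:=R_NormedModule) f a b l1 l2).
Qed.

Lemma is_RInt_lin_comb (f g : R -> R) a b l1 l2 p q :
  is_RInt f a b l1 -> is_RInt g a b l2 ->
  is_RInt (fun t => p * f t + q * g t) a b (p * l1 + q * l2).
Proof.
  intros Hf Hg. apply (is_RInt_plus (V:=R_NormedModule)).
  - exact (is_RInt_scal (V:=R_NormedModule) f a b p l1 Hf).
  - exact (is_RInt_scal (V:=R_NormedModule) g a b q l2 Hg).
Qed.

Lemma is_RInt_Cmult_l (w : C) (f : R -> C) a b (l : C) :
  @is_RInt C_R_CompleteNormedModule f a b l ->
  @is_RInt C_R_CompleteNormedModule (fun t => Cmult w (f t)) a b (Cmult w l).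
Proof.
  intros Hl. destruct w as [w1 w2].
  assert (H1 := is_RInt_fct_extend_fst (U:=R_NormedModule) (V:=R_NormedModule) _ _ _ _ Hl).
  assert (H2 := is_RInt_fct_extend_snd (U:=R_NormedModule) (V:=R_NormedModule) _ _ _ _ Hl).
  apply is_RInt_C_pair; simpl.
  - replace (w1 * fst l - w2 * snd l) with (w1 * fst l + - w2 * snd l) by ring.
    eapply is_RInt_ext; [| exact (is_RInt_lin_comb _ _ _ _ _ _ w1 (- w2) H1 H2)].
    intros; simpl; ring.
  - replace (w1 * snd l + w2 * fst l) with (w2 * fst l + w1 * snd l) by ring.
    eapply is_RInt_ext; [| exact (is_RInt_lin_comb _ _ _ _ _ _ w2 w1 H1 H2)].
    intros; simpl; ring.
Qed.

Section ContinuousSubstitution.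

Variable g : R -> R.
Hypothesis g_cont : forall x, continuous g x.

Let g_ex_RInt a b : ex_RInt g a b.
Proof. apply (ex_RInt_continuous (V:=R_CompleteNormedModule)); intros; apply g_cont. Qed.

Lemma is_RInt_comp_shift_div L s u v : L <> 0 ->
  is_RInt (fun t => g ((t + s) / L)) u v
    (L * (RInt g 0 ((v + s) / L) - RInt g 0 ((u + s) / L))).
Proof.
  intros HL.
  assert (H := is_RInt_comp_lin g (/ L) (s / L) u v _ (RInt_correct _ _ _ (g_ex_RInt _ _))).
  assert (HLH := is_RInt_scal (V:=R_NormedModule) _ u v L _ H).
  replace (/ L * u + s / L) with ((u + s) / L) in HLH by (field; lra).
  replace (/ L * v + s / L) with ((v + s) / L) in HLH by (field; lra).
  eapply is_RInt_ext; [| replace (L * _) with (scal L (RInt g ((u + s) / L) ((v + s) / L)));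
    [exact HLH |]].
  - intros x _. unfold scal; simpl; unfold mult; simpl.
    replace (/ L * x + s / L) with ((x + s) / L) by (field; lra). field. lra.
  - rewrite <- (RInt_Chasles g 0 ((u + s) / L) ((v + s) / L)) by apply g_ex_RInt.
    unfold scal, plus; simpl; unfold mult, plus; simpl. ring.
Qed.

Lemma RInt_0_opp_of_even : (forall x, g (- x) = g x) ->
  forall u, RInt g 0 (- u) = - RInt g 0 u.
Proof.
  intros g_even u.
  assert (H := is_RInt_comp_shift_div (-1) 0 0 u ltac:(lra)).
  replace ((u + 0) / -1) with (- u) in H by (field; lra).
  replace ((0 + 0) / -1) with 0 in H by (field; lra).
  rewrite RInt_point in H.
  assert (E : RInt g 0 u = RInt (fun t => g ((t + 0) / -1)) 0 u).
  { apply RInt_ext. intros x _. rewrite <- g_even. f_equal. field. }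
  rewrite E, (is_RInt_unique _ _ _ _ H). simpl. unfold zero; simpl. lra.
Qed.

End ContinuousSubstitution.

Lemma continuous_cos_fresnel x : continuous (fun t => cos (PI * t ^ 2 / 2)) x.
Proof. apply (ex_derive_continuous (V:=R_NormedModule)). auto_derive; auto. Qed.

Lemma continuous_sin_fresnel x : continuous (fun t => sin (PI * t ^ 2 / 2)) x.
Proof. apply (ex_derive_continuous (V:=R_NormedModule)). auto_derive; auto. Qed.

Lemma FresnelC_opp u : FresnelC (- u) = - FresnelC u.
Proof.
  apply RInt_0_opp_of_even; [exact continuous_cos_fresnel |].
  intros x. do 3 f_equal. ring.
Qed.

Lemma FresnelS_opp u : FresnelS (- u) = - FresnelS u.
Proof.
  apply RInt_0_opp_of_even; [exact continuous_sin_fresnel |].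
  intros x. do 3 f_equal. ring.
Qed.

(* For [sg = 1] or [sg = -1], an antiderivative of [t |-> expi (sg * PI * t ^ 2 / (2 * L ^ 2))]. *)
Definition chirp_primitive (L sg w : R) : C :=
  (L * FresnelC (w / L), sg * (L * FresnelS (w / L))).

Lemma chirp_primitive_opp L sg w :
  chirp_primitive L sg (- w) = Copp (chirp_primitive L sg w).
Proof.
  unfold chirp_primitive, Copp; simpl.
  replace (- w / L) with (- (w / L)) by (unfold Rdiv; ring).
  rewrite FresnelC_opp, FresnelS_opp. f_equal; ring.
Qed.

Lemma Cmod_sqr (p : C) : Cmod p ^ 2 = fst p ^ 2 + snd p ^ 2.
Proof. unfold Cmod. rewrite pow2_sqrt; [ring | nra]. Qed.

Section Chirp.

Variables L sg : R.
Hypothesis L_pos : 0 < L.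
Hypothesis sg_sign : sg = 1 \/ sg = -1.

Lemma is_RInt_expi_chirp s u v :
  @is_RInt C_R_CompleteNormedModule (fun t => expi (sg * PI / (2 * L ^ 2) * (t + s) ^ 2)) u v
    (Cminus (chirp_primitive L sg (v + s)) (chirp_primitive L sg (u + s))).
Proof.
  assert (HL : L <> 0) by lra.
  eapply is_RInt_ext.
  { intros t _. symmetry.
    replace (sg * PI / (2 * L ^ 2) * (t + s) ^ 2) with (sg * (PI * ((t + s) / L) ^ 2 / 2))
      by (field; exact HL).
    exact (expi_sign _ _ sg_sign). }
  apply is_RInt_C_pair; unfold chirp_primitive; simpl.
  - replace (_ + - _) with (L * (FresnelC ((v + s) / L) - FresnelC ((u + s) / L))) by ring.
    exact (is_RInt_comp_shift_div _ continuous_cos_fresnel L s u v HL).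
  - replace (_ + - _) with (sg * (L * (FresnelS ((v + s) / L) - FresnelS ((u + s) / L)))) by ring.
    exact (is_RInt_scal (V:=R_NormedModule) _ u v sg _
             (is_RInt_comp_shift_div _ continuous_sin_fresnel L s u v HL)).
Qed.

Lemma RInt_RInt_expi_chirp s a1 b1 a2 b2 :
  @RInt C_R_CompleteNormedModule (fun x => @RInt C_R_CompleteNormedModule
      (fun y => expi (sg * PI / (2 * L ^ 2) * ((x + s) ^ 2 + y ^ 2))) a2 b2) a1 b1
  = Cmult (Cminus (chirp_primitive L sg b2) (chirp_primitive L sg a2))
          (Cminus (chirp_primitive L sg (b1 + s)) (chirp_primitive L sg (a1 + s))).
Proof.
  set (c := sg * PI / (2 * L ^ 2)).
  set (A := Cminus (chirp_primitive L sg b2) (chirp_primitive L sg a2)).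
  assert (Hinner : forall x, @RInt C_R_CompleteNormedModule
      (fun y => expi (c * ((x + s) ^ 2 + y ^ 2))) a2 b2 = Cmult A (expi (c * (x + s) ^ 2))).
  { intros x. rewrite Cmult_comm. apply is_RInt_unique.
    assert (HA := is_RInt_expi_chirp 0 a2 b2). rewrite !Rplus_0_r in HA.
    eapply is_RInt_ext; [| exact (is_RInt_Cmult_l _ _ _ _ _ HA)].
    intros y _. cbv beta. rewrite <- expi_add. f_equal. unfold c. ring. }
  rewrite (RInt_ext (V:=C_R_CompleteNormedModule) _ _ _ _ (fun x _ => Hinner x)).
  apply is_RInt_unique, is_RInt_Cmult_l, is_RInt_expi_chirp.
Qed.

Lemma Cmod_chirp_primitive_add_sqr w1 w2 :
  Cmod (Cplus (chirp_primitive L sg w1) (chirp_primitive L sg w2)) ^ 2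
  = L ^ 2 * ((FresnelC (w1 / L) + FresnelC (w2 / L)) ^ 2
             + (FresnelS (w1 / L) + FresnelS (w2 / L)) ^ 2).
Proof.
  rewrite Cmod_sqr. unfold chirp_primitive; simpl.
  destruct sg_sign as [-> | ->]; ring.
Qed.

End Chirp.

Definition fresnel_length (lambda z F : R) : R := sqrt (lambda * (F * z / Rabs (F - z)) / 2).

Definition chirp_sign (z F : R) : R := if Rlt_dec F z then 1 else -1.

Lemma chirp_sign_cases z F : chirp_sign z F = 1 \/ chirp_sign z F = -1.
Proof. unfold chirp_sign. destruct (Rlt_dec F z); auto. Qed.

Section Array.

Variables lambda z F : R.
Hypotheses (lambda_pos : 0 < lambda) (z_pos : 0 < z) (F_pos : 0 < F) (z_neq_F : z <> F).

Let zeff := F * z / Rabs (F - z).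
Let L := fresnel_length lambda z F.
Let P := chirp_primitive L (chirp_sign z F).

Lemma zeff_pos : 0 < zeff.
Proof.
  assert (0 < Rabs (F - z)) by (apply Rabs_pos_lt; lra).
  unfold zeff. apply Rdiv_lt_0_compat; nra.
Qed.

Lemma fresnel_length_pos : 0 < L.
Proof. apply sqrt_lt_R0. assert (H := zeff_pos). fold zeff. nra. Qed.

Lemma fresnel_length_sqr : L ^ 2 = lambda * zeff / 2.
Proof.
  unfold L, fresnel_length. rewrite pow2_sqrt; [easy |].
  assert (H := zeff_pos). fold zeff. nra.
Qed.

Lemma lambda_div_8_zeff : lambda / (8 * zeff) = lambda ^ 2 / (16 * L ^ 2).
Proof. rewrite fresnel_length_sqr. assert (H := zeff_pos). field. lra. Qed.

Lemma sqrt_lambda_div_8_zeff : sqrt (lambda / (8 * zeff)) = lambda / (4 * L).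
Proof.
  assert (HL := fresnel_length_pos).
  apply sqrt_lem_1.
  - apply Rlt_le, Rdiv_lt_0_compat; [lra |]. assert (H := zeff_pos). lra.
  - apply Rlt_le, Rdiv_lt_0_compat; lra.
  - rewrite lambda_div_8_zeff. field. lra.
Qed.

Lemma sqrt_2_div_lambda_zeff : sqrt (2 / (lambda * zeff)) = / L.
Proof.
  assert (HL := fresnel_length_pos).
  apply sqrt_lem_1.
  - apply Rlt_le, Rdiv_lt_0_compat; [lra |]. assert (H := zeff_pos). nra.
  - apply Rlt_le, Rinv_0_lt_compat; lra.
  - replace (lambda * zeff) with (2 * L ^ 2) by (rewrite fresnel_length_sqr; field).
    field. lra.
Qed.

Lemma integrand_eq_expi s x y :
  integrand lambda z F s x y
  = expi (chirp_sign z F * PI / (2 * L ^ 2) * ((x + s) ^ 2 + y ^ 2)).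
Proof.
  unfold integrand. rewrite <- expi_add, fresnel_length_sqr. f_equal.
  unfold zeff, chirp_sign. destruct (Rlt_dec F z).
  - rewrite Rabs_left by lra. field. repeat split; lra.
  - rewrite Rabs_right by lra. field. repeat split; lra.
Qed.

Lemma ula_integral_eq N s :
  ula_integral lambda N z F s
  = Cmult (Cminus (P (lambda / 4)) (P (- (lambda / 4))))
          (Cminus (P (INR N * lambda / 4 + s)) (P (- (INR N * lambda / 4) + s))).
Proof.
  unfold ula_integral. cbv zeta.
  replace (- (lambda / 2) / 2) with (- (lambda / 4)) by field.
  replace (lambda / 2 / 2) with (lambda / 4) by field.
  replace (- (INR N * (lambda / 2)) / 2) with (- (INR N * lambda / 4)) by field.
  replace (INR N * (lambda / 2) / 2) with (INR N * lambda / 4) by field.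
  rewrite <- (RInt_RInt_expi_chirp _ _ fresnel_length_pos (chirp_sign_cases z F)).
  apply (RInt_ext (V:=C_R_CompleteNormedModule)); intros x _.
  apply (RInt_ext (V:=C_R_CompleteNormedModule)); intros y _.
  apply integrand_eq_expi.
Qed.

Lemma ula_integral_pair_add N d :
  Cplus (ula_integral lambda N z F (- d)) (ula_integral lambda N z F d)
  = Cmult (Cplus (P (lambda / 4)) (P (lambda / 4)))
          (Cmult 2 (Cplus (P (INR N * lambda / 4 + d)) (P (INR N * lambda / 4 - d)))).
Proof.
  rewrite !ula_integral_eq.
  replace (INR N * lambda / 4 + - d) with (INR N * lambda / 4 - d) by ring.
  replace (- (INR N * lambda / 4) + - d) with (- (INR N * lambda / 4 + d)) by ring.
  replace (- (INR N * lambda / 4) + d) with (- (INR N * lambda / 4 - d)) by ring.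
  unfold P. rewrite !chirp_primitive_opp. ring.
Qed.

End Array.

Theorem theorem2 (lambda : R) (N : nat) (Delta z F : R) :
  0 < lambda -> (1 <= N)%nat -> 0 <= Delta -> 0 < z -> 0 < F -> z <> F ->
  let Db := Delta_bar lambda N Delta in
  let zeff := F * z / Rabs (F - z) in
  let a := lambda / (8 * zeff) in
  let beta1 := sqrt a * INR N + sqrt (2 / (lambda * zeff)) * Db in
  let beta2 := sqrt a * INR N - sqrt (2 / (lambda * zeff)) * Db in
  G2hat lambda N Delta z F =
  / (2 * INR N * a) ^ 2
  * (FresnelC (sqrt a) ^ 2 + FresnelS (sqrt a) ^ 2)
  * ((FresnelC beta1 + FresnelC beta2) ^ 2
     + (FresnelS beta1 + FresnelS beta2) ^ 2).
Proof.
  intros Hl HN _ Hz HF Hzf Db zeff a beta1 beta2.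
  assert (HNpos : 0 < INR N) by (apply lt_0_INR; lia).
  assert (HL := fresnel_length_pos lambda z F Hl Hz HF Hzf).
  set (L := fresnel_length lambda z F) in *.
  assert (Ha : a = lambda ^ 2 / (16 * L ^ 2))
    by exact (lambda_div_8_zeff lambda z F Hl Hz HF Hzf).
  assert (Hsqrt_a : sqrt a = lambda / (4 * L))
    by exact (sqrt_lambda_div_8_zeff lambda z F Hl Hz HF Hzf).
  assert (Hsqrt_k : sqrt (2 / (lambda * zeff)) = / L)
    by exact (sqrt_2_div_lambda_zeff lambda z F Hl Hz HF Hzf).
  assert (Hbeta1 : beta1 = (INR N * lambda / 4 + Db) / L)
    by (unfold beta1; rewrite Hsqrt_a, Hsqrt_k; field; lra).
  assert (Hbeta2 : beta2 = (INR N * lambda / 4 - Db) / L)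
    by (unfold beta2; rewrite Hsqrt_a, Hsqrt_k; field; lra).
  unfold G2hat; cbv zeta; fold Db.
  rewrite ula_integral_pair_add by assumption.
  rewrite !Cmod_mult, !Rpow_mult_distr, Cmod_R, Rabs_pos_eq by lra.
  rewrite !(Cmod_chirp_primitive_add_sqr L _ (chirp_sign_cases z F)).
  replace (lambda / 4 / L) with (sqrt a) by (rewrite Hsqrt_a; field; lra).
  rewrite <- Hbeta1, <- Hbeta2, Ha.
  field. lra.
Qed.
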